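(* Let $R$ be a commutative ring with $1\neq 0$, $S\subseteq R$ a multiplicatively closed subset, $M$ an $R$-module and $N\subseteq K$ submodules of $M$. If $N$ is a weak $S$-copure submodule of $M$, then $K/N$ is a weak $S$-copure submodule of the $R$-module $M/N$.
   Context: All rings are commutative with $1\neq 0$ and all modules are unital. A multiplicatively closed subset (m.c.s.) $S$ of $R$ is a subset with $0\notin S$, $1\in S$, and $ss'\in S$ for all $s,s'\in S$. For an ideal $I$ and submodule $L$, $(L:_M I)=\{m\in M: Im\subseteq L\}$, $(0:_M I)=\{m\in M: Im=0\}$, and $(L:_R M)=\{r\in R: rM\subseteq L\}$. A prime submodule of $M$ is a proper submodule $P$ such that $rm\in P$ ($r\in R$, $m\in M$) implies $m\in P$ or $r\in(P:_R M)$. A submodule $L$ of $M$ is $S$-copure if there exists $s\in S$ such that $s(L:_M I)\subseteq L+(0:_M I)$ for every ideal $I$ of $R$. A submodule $N$ of $M$ is weak $S$-copure if every prime submodule of $M$ containing $N$ is $S$-copure. *)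

From HB Require Import structures.
From mathcomp Require Import all_boot all_algebra.
Set Implicit Arguments. Unset Strict Implicit. Unset Printing Implicit Defensive.
Import GRing.Theory.
Local Open Scope ring_scope.

Definition psubset (T : Type) := T -> Prop.

Section Defs.
Variable R : comNzRingType.

Definition mcs (S : psubset R) : Prop :=
  ~ S 0 /\ S 1 /\ (forall s t, S s -> S t -> S (s * t)).

Definition is_ideal (I : psubset R) : Prop :=
  I 0 /\ (forall x y, I x -> I y -> I (x + y)) /\
  (forall r x, I x -> I (r * x)).

Variable M : lmodType R.

Definition is_submodule (L : psubset M) : Prop :=
  L 0 /\ (forall x y, L x -> L y -> L (x + y)) /\
  (forall (r : R) x, L x -> L (r *: x)).

Definition colonM (L : psubset M) (I : psubset R) : psubset M :=
  fun m => forall r, I r -> L (r *: m).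
Definition annM (I : psubset R) : psubset M :=
  fun m => forall r, I r -> r *: m = 0.
Definition colonR (L : psubset M) : psubset R :=
  fun r => forall m : M, L (r *: m).

Definition prime_submodule (P : psubset M) : Prop :=
  is_submodule P /\ (exists m, ~ P m) /\
  (forall (r : R) (m : M), P (r *: m) -> P m \/ colonR P r).

Definition S_copure (S : psubset R) (L : psubset M) : Prop :=
  exists s, S s /\
    forall I, is_ideal I -> forall m, colonM L I m ->
      exists a b, L a /\ annM I b /\ s *: m = a + b.

Definition weak_S_copure (S : psubset R) (N : psubset M) : Prop :=
  forall P, prime_submodule P -> (forall x, N x -> P x) -> S_copure S P.

End Defs.

From HB Require Import structures.
From mathcomp Require Import all_boot all_algebra.
Set Implicit Arguments. Unset Strict Implicit. Unset Printing Implicit Defensive.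
Import GRing.Theory.
Local Open Scope ring_scope.

(* Everything is transported along the surjective linear
   map pi : M -> M/N by taking preimages.
   - The preimage of a prime submodule of M/N under a surjective linear map
     is a prime submodule of M (surjectivity keeps it proper).
   - If the preimage pi^-1(L) of a subset L of M/N is S-copure, then so is L:
     the same s works, since every element of M/N lifts, and pi sends
     pi^-1(L) into L and (0 :_M I) into (0 :_{M/N} I).
   Given a prime P of M/N containing K/N, its preimage is a prime of M
   containing K, hence N; as N is weak S-copure this preimage is S-copure,
   so P is S-copure. *)

Section Preimage.
Variables (R : comNzRingType) (M Q : lmodType R) (f : {linear M -> Q}).
Hypothesis f_surj : forall q : Q, exists m : M, f m = q.

Definition preimage (L : psubset Q) : psubset M := fun m => L (f m).

Lemma prime_submodule_preimage (P : psubset Q) :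
  prime_submodule P -> prime_submodule (preimage P).
Proof.
move=> [[P0 [PD PZ]] [[q nPq] Pprime]]; split; [split; [|split] | split].
- by rewrite /preimage linear0.
- by move=> x y Px Py; rewrite /preimage linearD; apply: PD.
- by move=> r x Px; rewrite /preimage linearZ; apply: PZ.
- by have [m fm] := f_surj q; exists m; rewrite /preimage fm.
- move=> r m; rewrite /preimage linearZ => /Pprime [Pm | rP]; first by left.
  by right=> m'; rewrite /preimage linearZ; apply: rP.
Qed.

Lemma annM_image (I : psubset R) (b : M) : annM I b -> annM I (f b).
Proof. by move=> Ib r Ir; rewrite -linearZ (Ib r Ir) raddf0. Qed.

Lemma S_copure_of_preimage (S : psubset R) (L : psubset Q) :
  S_copure S (preimage L) -> S_copure S L.
Proof.
move=> [s [Ss copure]]; exists s; split=> // I I_ideal q Lq.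
have [m fm] := f_surj q.
have Lm : colonM (preimage L) I m.
  by move=> r Ir; rewrite /preimage linearZ fm; apply: Lq.
have [a [b [La [Ib sm]]]] := copure I I_ideal m Lm.
exists (f a), (f b); split=> //; split; first exact: annM_image.
by rewrite -fm -linearZ sm linearD.
Qed.

End Preimage.

Theorem theorem3p5 (R : comNzRingType) (S : psubset R) (M Q : lmodType R)
    (pi : {linear M -> Q}) (N K : psubset M) :
  mcs S ->
  is_submodule N -> is_submodule K -> (forall x, N x -> K x) ->
  (forall q : Q, exists m : M, pi m = q) ->
  (forall m : M, pi m = 0 <-> N m) ->
  weak_S_copure S N ->
  weak_S_copure S (fun q : Q => exists k, K k /\ pi k = q).
Proof.
move=> _ _ _ NK pi_surj _ N_weak P P_prime KN_P.
apply: (S_copure_of_preimage pi_surj); apply: N_weak.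
- exact: prime_submodule_preimage.
- by move=> x Nx; apply: KN_P; exists x; split; [apply: NK|].
Qed.
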